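(* Let $d\ge 2$ and $0<a<b\leq d$ be integers and $n\geq 1$. Then $$\ell_d^{(a,b)}(n)=\sum_{k=0}^{\lfloor (n-a)/d\rfloor}\binom{2k+n-a-dk}{n-a-dk}+\sum_{k=0}^{\lfloor (n-b)/d\rfloor}\binom{2k+1+n-b-dk}{n-b-dk},$$ where a sum with negative upper limit is empty.
   Context: A partition is a finite nonincreasing sequence of positive integers (its parts); its size is not fixed. The perimeter of a partition with largest part $\alpha$ and $\lambda$ parts is $\alpha+\lambda-1$. For $0<a<b\le d$, $\ell_d^{(a,b)}(n)$ is the number of partitions of perimeter $n$ all of whose parts are congruent to $a$ or $b$ modulo $d$. *)

From mathcomp Require Import all_boot.
Set Implicit Arguments. Unset Strict Implicit. Unset Printing Implicit Defensive.

Definition is_partition (s : seq nat) : bool :=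
  sorted geq s && all (fun x => 0 < x) s.

Definition largest_part (s : seq nat) : nat := foldr maxn 0 s.

Definition perimeter (s : seq nat) : nat := largest_part s + size s - 1.

Fixpoint all_seqs (m L : nat) : seq (seq nat) :=
  match L with
  | 0 => [:: [::]]
  | L'.+1 => [::] :: [seq x :: t | x <- iota 1 m, t <- all_seqs m L']
  end.

Definition parts_in (d a b : nat) (s : seq nat) : bool :=
  all (fun x => (x %% d == a %% d) || (x %% d == b %% d)) s.

(* A partition of perimeter n >= 1 has at most n
   parts, each at most n, so it occurs (exactly once) in all_seqs n n. *)
Definition ell (d a b n : nat) : nat :=
  count (fun s => [&& is_partition s, perimeter s == n & parts_in d a b s])
        (all_seqs n n).

From mathcomp Require Import all_boot zify.
Set Implicit Arguments. Unset Strict Implicit. Unset Printing Implicit Defensive.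

(* A partition of perimeter n with largest part x has exactly n + 1 - x parts,
   so after removing the largest part what remains is a nonincreasing sequence
   of n - x admissible parts, each at most x.  If x is the N-th admissible
   number, there are 'C(N + (n - x) - 1, n - x) such sequences (multisets).
   The admissible numbers are a + d k and b + d k; a + d k is the (2k+1)-th
   and b + d k the (2k+2)-th of them, which yields the two sums. *)

Lemma count_allpairs_cons (T : Type) (P : pred (seq T)) (s : seq T) (u : seq (seq T)) :
  count P [seq x :: t | x <- s, t <- u] = \sum_(x <- s) count (fun t => P (x :: t)) u.
Proof.
elim: s => [|x s IH]; first by rewrite big_nil.
by rewrite allpairs_cons count_cat count_map IH big_cons.
Qed.

Lemma count_all_seqsS (P : pred (seq nat)) m L :
  count P (all_seqs m L.+1) =
  P [::] + \sum_(x <- iota 1 m) count (fun t => P (x :: t)) (all_seqs m L).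
Proof. by rewrite /= count_allpairs_cons. Qed.

Lemma count_andl (T : Type) (b : bool) (P : pred T) s :
  count (fun t => b && P t) s = b * count P s.
Proof. by case: b; rewrite ?mul1n ?mul0n ?count_pred0. Qed.

Lemma iotaS_rcons m n : iota m n.+1 = rcons (iota m n) (m + n).
Proof. by rewrite -addn1 iotaD cats1. Qed.

(* Truncated subtraction still gives [multichoose 0 0 = 1]. *)
Definition multichoose N r := 'C(N + r - 1, r).

Lemma multichooseS N r : multichoose N r.+1 = \sum_(j < N) multichoose j.+1 r.
Proof.
rewrite /multichoose; elim: N => [|N IH]; first by rewrite big_ord0 bin_small //; lia.
rewrite big_ord_recr /= -IH.
have -> : N.+1 + r.+1 - 1 = (N + r).+1 by lia.
have -> : N + r.+1 - 1 = N + r by lia.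
have -> : N.+1 + r - 1 = N + r by lia.
by rewrite binS.
Qed.

Section NonincreasingSequences.
Variable S : pred nat.

Definition noninc_below c r (s : seq nat) :=
  [&& sorted geq s, all (fun y => S y && (y <= c)) s & size s == r].

Lemma noninc_below_cons c r x t :
  noninc_below c r.+1 (x :: t) = (S x && (x <= c)) && noninc_below x r t.
Proof.
rewrite /noninc_below /= (path_sortedE (rev_trans leq_trans)) eqSS.
case: (S x) (boolP (x <= c)) => [] [] //= le_xc; rewrite ?andbF //.
case: (sorted _ t); rewrite ?andbF //= andbT andbA -all_predI.
congr (_ && _); apply: eq_all => y /=.
by case: (S y); rewrite ?andbF //; apply/andb_idr => le_yx; lia.
Qed.

Lemma sum_rank_iota (F : nat -> nat) c :
  \sum_(x <- iota 1 c) S x * F (count S (iota 1 x)) =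
  \sum_(j < count S (iota 1 c)) F j.+1.
Proof.
elim: c => [|c IH]; first by rewrite big_nil big_ord0.
have countS : count S (iota 1 c.+1) = count S (iota 1 c) + S c.+1.
  by rewrite iotaS_rcons add1n -cats1 count_cat /= addn0.
rewrite countS iotaS_rcons add1n -cats1 big_cat big_seq1 IH countS.
case: (S c.+1) => /=; last by rewrite mul0n !addn0.
by rewrite mul1n addn1 big_ord_recr.
Qed.

Lemma count_noninc_below m L c r : c <= m -> r <= L ->
  count (noninc_below c r) (all_seqs m L) = multichoose (count S (iota 1 c)) r.
Proof.
elim: r m L c => [|r IH] m [|L] c // le_cm le_rL.
- by rewrite /multichoose addn0 bin0.
- rewrite count_all_seqsS big1 ?addn0 /multichoose ?addn0 ?bin0 // => x _.
  by rewrite (@eq_count _ _ pred0) ?count_pred0 // => t; rewrite /noninc_below !andbF.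
rewrite count_all_seqsS add0n multichooseS -(sum_rank_iota (multichoose^~ r)).
under eq_bigr do rewrite (eq_count (noninc_below_cons c r _)) count_andl.
rewrite -(subnKC le_cm) iotaD big_cat /= [X in _ + X]big1_seq ?addn0.
  apply: eq_big_seq => x; rewrite mem_iota => /andP[_ lt_xc].
  by rewrite (_ : x <= c) ?andbT ?IH //; lia.
move=> x /andP[_]; rewrite mem_iota => /andP[lt_cx _].
by rewrite (_ : x <= c = false) ?andbF //; lia.
Qed.

End NonincreasingSequences.

Definition admissible_part d a b y :=
  (0 < y) && ((y %% d == a %% d) || (y %% d == b %% d)).

Lemma largest_part_le x t : all (geq x) t -> largest_part t <= x.
Proof. by elim: t => //= y t IH /andP[le_yx /IH]; rewrite geq_max le_yx. Qed.

Lemma ell_cons d a b n x t : 0 < x -> x <= n ->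
  [&& is_partition (x :: t), perimeter (x :: t) == n & parts_in d a b (x :: t)] =
  admissible_part d a b x && noninc_below (admissible_part d a b) x (n - x) t.
Proof.
move=> x_gt0 le_xn.
rewrite /is_partition /parts_in /perimeter /noninc_below /admissible_part /=.
rewrite (path_sortedE (rev_trans leq_trans)) x_gt0 /=.
set in_class := fun y => (y %% d == a %% d) || (y %% d == b %% d).
have -> : all (fun y => (0 < y) && in_class y && (y <= x)) t =
          [&& all (geq x) t, all (leq 1) t & all in_class t].
  by rewrite -!all_predI; apply: eq_all => y /=; rewrite andbC andbA.
case: (boolP (all (geq x) t)) => [le_tx|]; last by rewrite /= !andbF.
have -> : maxn x (largest_part t) = x by apply/maxn_idPl/largest_part_le.
have -> : (x + (size t).+1 - 1 == n) = (size t == n - x) by apply/eqP/eqP; lia.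
by case: (sorted geq t) (all (leq 1) t) (all in_class t) => [] [] [] /=; rewrite ?andbT ?andbF // andbC.
Qed.

Lemma ell_by_largest_part d a b n : 0 < n ->
  ell d a b n = \sum_(x <- iota 1 n) admissible_part d a b x *
                  multichoose (count (admissible_part d a b) (iota 1 x)) (n - x).
Proof.
case: n => // n _; rewrite /ell count_all_seqsS add0n.
apply: eq_big_seq => x; rewrite mem_iota => /andP[x_gt0 lt_x_n1].
rewrite -(count_noninc_below _ (m := n.+1) (L := n)); [|lia|lia].
by rewrite -count_andl; apply: eq_count => t; rewrite ell_cons //; lia.
Qed.

Lemma divnMDl_small d q r : r < d -> (q * d + r) %/ d = q.
Proof. by move=> lt_rd; rewrite divnMDl ?divn_small ?addn0 //; lia. Qed.

Section Residues.
Variables d c : nat.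
Hypotheses (c_gt0 : 0 < c) (le_cd : c <= d).

Lemma divn_shiftS n : (n.+1 + d - c) %/ d = (n + d - c) %/ d + (n.+1 %% d == c %% d).
Proof.
have -> : n.+1 + d - c = (n + d - c).+1 by lia.
rewrite divnS ?(leq_trans c_gt0) // addnC.
have -> : (n + d - c).+1 = n.+1 + d - c by lia.
by rewrite -eqn_mod_dvd ?modnDr //; lia.
Qed.

Lemma residue_last n : n.+1 %% d == c %% d -> c + d * ((n + d - c) %/ d) = n.+1.
Proof.
move=> mod_n; have := divn_shiftS n; rewrite mod_n.
have /dvdnP[q eq_q] : d %| n.+1 + d - c by rewrite -eqn_mod_dvd ?modnDr //; lia.
rewrite eq_q mulnK ?(leq_trans c_gt0) // addn1 => eq_q_succ.
nia.
Qed.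

Lemma filter_residue_iota n :
  [seq x <- iota 1 n | x %% d == c %% d] =
  [seq c + d * k | k <- iota 0 ((n + d - c) %/ d)].
Proof.
elim: n => [|n IH]; first by rewrite divn_small //; lia.
rewrite iotaS_rcons add1n filter_rcons IH divn_shiftS.
case: ifP => [mod_n|_]; last by rewrite addn0.
by rewrite addn1 iotaS_rcons add0n map_rcons residue_last.
Qed.

Lemma count_residue_iota n :
  count (fun x => x %% d == c %% d) (iota 1 n) = (n + d - c) %/ d.
Proof. by rewrite -size_filter filter_residue_iota size_map size_iota. Qed.

Lemma sum_residue_iota (F : nat -> nat) n :
  \sum_(x <- iota 1 n | x %% d == c %% d) F x = \sum_(0 <= k < (n + d - c) %/ d) F (c + d * k).
Proof. by rewrite -big_filter filter_residue_iota big_map /index_iota subn0. Qed.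

Lemma num_residues_le n :
  (n + d - c) %/ d = if c <= n then ((n - c) %/ d).+1 else 0.
Proof.
case: ifP => [le_cn|lt_nc]; last by rewrite divn_small //; lia.
by rewrite (_ : n + d - c = (n - c) + 1 * d) ?divnDMl ?addn1 //; lia.
Qed.

End Residues.

Section TwoResidues.
Variables d a b : nat.
Hypotheses (a_gt0 : 0 < a) (lt_ab : a < b) (le_bd : b <= d).

Lemma residues_disjoint x : x %% d == a %% d -> (x %% d == b %% d) = false.
Proof.
rewrite (modn_small (_ : a < d)); last lia.
move=> /eqP ->; apply/negbTE.
have [lt_bd|ge_bd] := ltnP b d; first by rewrite modn_small //; lia.
by rewrite (_ : b = d) ?modnn; lia.
Qed.

Lemma count_admissible x :
  count (admissible_part d a b) (iota 1 x) = (x + d - a) %/ d + (x + d - b) %/ d.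
Proof.
rewrite -(count_residue_iota (c := a)) -?(count_residue_iota (c := b)); try lia.
rewrite -count_predUI (@eq_count _ (predI _ _) pred0) ?count_pred0 ?addn0; last first.
  by move=> y /=; case: (boolP (y %% d == a %% d)) => // /residues_disjoint ->.
apply: eq_in_count => y; rewrite mem_iota => /andP[y_gt0 _].
by rewrite /admissible_part y_gt0.
Qed.

Lemma sum_admissible (F : nat -> nat) n :
  \sum_(x <- iota 1 n) admissible_part d a b x * F x =
  \sum_(0 <= k < (n + d - a) %/ d) F (a + d * k) +
  \sum_(0 <= k < (n + d - b) %/ d) F (b + d * k).
Proof.
rewrite -!sum_residue_iota; try lia.
rewrite !(big_mkcond (fun x => _ == _)) -big_split /=.
apply: eq_big_seq => x; rewrite mem_iota => /andP[x_gt0 _].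
rewrite /admissible_part x_gt0 /=.
case: (boolP (x %% d == a %% d)) => [/residues_disjoint -> | _] /=.
  by rewrite mul1n addn0.
by case: (x %% d == b %% d); rewrite /= ?mul1n ?mul0n.
Qed.

Lemma count_admissible_at_a k :
  count (admissible_part d a b) (iota 1 (a + d * k)) = k.*2.+1.
Proof.
rewrite count_admissible.
have -> : a + d * k + d - a = k.+1 * d by nia.
have -> : a + d * k + d - b = k * d + (a + d - b) by nia.
by rewrite mulnK ?divnMDl_small; lia.
Qed.

Lemma count_admissible_at_b k :
  count (admissible_part d a b) (iota 1 (b + d * k)) = k.*2.+2.
Proof.
rewrite count_admissible.
have -> : b + d * k + d - a = k.+1 * d + (b - a) by nia.
have -> : b + d * k + d - b = k.+1 * d by nia.
by rewrite mulnK ?divnMDl_small; lia.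
Qed.

End TwoResidues.

Theorem mainTheorem9 (d a b n : nat) :
  2 <= d -> 0 < a -> a < b -> b <= d -> 1 <= n ->
  ell d a b n =
    \sum_(0 <= k < (if a <= n then ((n - a) %/ d).+1 else 0))
        'C(2 * k + (n - a - d * k), n - a - d * k)
  + \sum_(0 <= k < (if b <= n then ((n - b) %/ d).+1 else 0))
        'C(2 * k + 1 + (n - b - d * k), n - b - d * k).
Proof.
(* [2 <= d] already follows from [0 < a < b <= d]. *)
move=> _ a_gt0 lt_ab le_bd n_gt0.
rewrite ell_by_largest_part // sum_admissible //.
rewrite -!num_residues_le; try lia.
congr (_ + _); apply: eq_bigr => k _.
  by rewrite count_admissible_at_a // /multichoose; congr 'C(_, _); lia.
by rewrite count_admissible_at_b // /multichoose; congr 'C(_, _); lia.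
Qed.
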